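(* Let $\delta_1=b-d>0$, $\delta_2=c-a>0$, $\delta=\delta_1+\delta_2$, $s^*=\delta_1/\delta$, $\gamma=s^*(1-s^* )$, let $p\in[0,1]$ and $\tau\ge 0$, and consider the replicator dynamics with discrete delays $$\frac{ds(t)}{dt}=s(t)(1-s(t))\big(- p\, \delta\, s(t-\tau)-(1-p)\, \delta\, s(t)+\delta_1\big).$$ Then: (i) if $p\le 0.5$, the mixed equilibrium $s^*$ is (locally) asymptotically stable for every value of $\tau\ge 0$; (ii) if $p>0.5$, a Hopf bifurcation of the equilibrium $s^*$ occurs at $\tau=\tau_{cr}$, where $$\tau_{cr}=\frac{\arccos\!\big(-\frac{1-p}{p}\big)}{\delta\gamma \sqrt{2p-1}},$$ with $\arccos$ taking values in $[0,\pi]$.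
   Context: Two-strategy evolutionary game with payoff matrix $\begin{pmatrix} a&b\\ c&d\end{pmatrix}$; $s(t)\in[0,1]$ is the fraction of the population playing strategy $A$; a strategy's payoff is felt with delay $\tau$ with probability $p$ and without delay with probability $1-p$. The linearization at $s^*$ (with $x=s-s^*$) is $\dot x(t)=-(1-p)\delta\gamma x(t)-p\delta\gamma x(t-\tau)$, with characteristic equation $\lambda+(1-p)\delta\gamma+p\delta\gamma e^{-\lambda\tau}=0$. Asymptotic stability means all characteristic roots have negative real part; a Hopf bifurcation at $\tau_{cr}$ means a pair of characteristic roots $\pm i w_0$, $w_0>0$, lies on the imaginary axis at $\tau=\tau_{cr}$ and crosses it transversally into the right half-plane as $\tau$ increases. *)

From Stdlib Require Import Reals.
From Coquelicot Require Import Coquelicot.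
Open Scope R_scope.

Definition delta1 (b d : R) : R := (b - d).
Definition delta2 (a c : R) : R := c - a.
Definition delta (a b c d : R) : R := delta1 b d + delta2 a c.
Definition sstar (a b c d : R) : R := delta1 b d / delta a b c d.
Definition gam (a b c d : R) : R := sstar a b c d * (1 - sstar a b c d).

Definition Cexp (z : C) : C :=
  (exp (Re z) * cos (Im z), exp (Re z) * sin (Im z)).

(* Characteristic function of the linearization at s*:
   lambda + (1-p) delta gamma + p delta gamma e^{-lambda tau}. *)
Definition charfun (p dl g tau : R) (lam : C) : C :=
  (lam + RtoC ((1 - p) * dl * g) + RtoC (p * dl * g) * Cexp (- (lam * RtoC tau)))%C.

Definition asympt_stable (p dl g tau : R) : Prop :=
  forall lam : C, charfun p dl g tau lam = 0%C -> Re lam < 0.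

Definition hopf_at (p dl g taucr : R) : Prop :=
  exists w0 : R, 0 < w0 /\
    charfun p dl g taucr (0, w0) = 0%C /\
    charfun p dl g taucr (0, - w0) = 0%C /\
    exists (eps : R) (lam : R -> C), 0 < eps /\
      lam taucr = (0, w0) /\
      (forall tau, Rabs (tau - taucr) < eps -> charfun p dl g tau (lam tau) = 0%C) /\
      continuous lam taucr /\
      exists r : R, 0 < r /\ is_derive (fun tau => Re (lam tau)) taucr r.

Definition tau_cr (a b c d p : R) : R :=
  acos (- ((1 - p) / p)) / (delta a b c d * gam a b c d * sqrt (2 * p - 1)).

(* Write A = (1 - p) delta gamma and B = p delta gamma, so that the characteristic
   function is lam + A + B e^{-lam tau}.
   (i) If |B| <= A, a root with Re lam >= 0 would give
   |lam + A| >= A >= |B| >= |B e^{-lam tau}| = |lam + A|, forcing lam = 0, which is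
   not a root.
   (ii) If |A| < B, a pair (tau, lam = x + i y) with theta = y tau in (0, pi) is a root
   as soon as x = -(A + theta cot theta / tau) and theta solves the phase equation
   ln (B tau) + A tau = ln (theta / sin theta) - theta cot theta, whose right-hand side
   is strictly increasing on (0, pi).  Inverting it gives a differentiable branch
   theta(tau), hence lam(tau), through i w at tau_cr = acos (-A/B) / w with
   w = sqrt (B^2 - A^2), and d Re lam / d tau = (B^2 - A^2) / (1 + 2 A tau_cr + B^2 tau_cr^2) > 0. *)

From Stdlib Require Import Reals Lra Psatz ClassicalEpsilon.
From Coquelicot Require Import Coquelicot.
Open Scope R_scope.

Lemma increasing_inverse_ex (f : R -> R) (lb ub : R) :
  lb < ub ->
  (forall x, lb <= x <= ub -> continuity_pt f x) ->
  (forall x y, lb <= x -> x < y -> y <= ub -> f x < f y) ->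
  exists g : R -> R,
    (forall x, lb <= x <= ub -> g (f x) = x) /\
    (forall y, f lb <= y <= f ub -> lb <= g y <= ub /\ f (g y) = y).
Proof.
  intros Hlt Hcont Hincr.
  assert (Hinj : forall x x', lb <= x <= ub -> lb <= x' <= ub -> f x = f x' -> x = x').
  { intros x x' Hx Hx' Heq.
    destruct (Rtotal_order x x') as [H | [H | H]]; [| exact H |].
    - pose proof (Hincr x x' ltac:(lra) H ltac:(lra)); lra.
    - pose proof (Hincr x' x ltac:(lra) H ltac:(lra)); lra. }
  assert (Hmono : forall x, lb <= x <= ub -> f lb <= f x <= f ub).
  { intros x Hx; split.
    - destruct (Req_dec lb x) as [-> | Hne]; [lra |].
      left; apply Hincr; lra.
    - destruct (Req_dec x ub) as [-> | Hne]; [lra |].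
      left; apply Hincr; lra. }
  assert (Hsol : forall y, exists x, f lb <= y <= f ub -> lb <= x <= ub /\ f x = y).
  { intros y; destruct (classic (f lb <= y <= f ub)) as [Hy | Hy].
    - destruct (Ranalysis5.f_interv_is_interv f lb ub y Hlt Hy Hcont) as [x Hx].
      exists x; auto.
    - exists lb; tauto. }
  pose (g := fun y => proj1_sig (constructive_indefinite_description _ (Hsol y))).
  assert (Hg : forall y, f lb <= y <= f ub -> lb <= g y <= ub /\ f (g y) = y).
  { intros y; unfold g; destruct constructive_indefinite_description; simpl; auto. }
  exists g; split; [| exact Hg].
  intros x Hx; destruct (Hg (f x) (Hmono x Hx)); apply Hinj; auto.
Qed.

Lemma derivable_pt_lim_increasing_inverse (f f' g : R -> R) (lb ub y : R) :
  lb < ub ->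
  (forall x, lb <= x <= ub -> derivable_pt_lim f x (f' x)) ->
  (forall x y, lb <= x -> x < y -> y <= ub -> f x < f y) ->
  (forall x, lb <= x <= ub -> g (f x) = x) ->
  (forall y, f lb <= y <= f ub -> lb <= g y <= ub /\ f (g y) = y) ->
  f lb < y < f ub -> f' (g y) <> 0 -> derivable_pt_lim g y (/ f' (g y)).
Proof.
  intros Hlt Hd Hincr Hgf Hg Hy Hf'.
  assert (Hflt : f lb < f ub) by (apply Hincr; lra).
  assert (Hcont : forall x, lb <= x <= ub -> continuity_pt f x).
  { intros x Hx; apply derivable_continuous_pt; exists (f' x); now apply Hd. }
  assert (Hgcont : continuity_pt g y).
  { apply (Ranalysis5.continuity_pt_recip_interv f g lb ub); auto;
      intros z Hz1 Hz2; destruct (Hg z ltac:(lra)); unfold comp, id; auto. }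
  assert (Hglb : g (f lb) = lb) by (apply Hgf; lra).
  assert (Hgub : g (f ub) = ub) by (apply Hgf; lra).
  assert (Prf : forall a, g (f lb) <= a <= g (f ub) -> derivable_pt f a).
  { rewrite Hglb, Hgub; intros a Ha; exists (f' a); now apply Hd. }
  assert (Prg : g (f lb) <= g y <= g (f ub)).
  { rewrite Hglb, Hgub; apply (Hg y); lra. }
  assert (Hder : derive_pt f (g y) (Prf (g y) Prg) = f' (g y)).
  { apply derive_pt_eq_0, Hd, (Hg y); lra. }
  pose proof (Ranalysis5.derivable_pt_lim_recip_interv f g (f lb) (f ub) y Prf Hgcont
                Hflt Hy Prg) as Hrecip.
  rewrite Hder in Hrecip.
  replace (/ f' (g y)) with (1 / f' (g y)) by (unfold Rdiv; ring).
  apply Hrecip; [| exact Hf'].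
  intros z Hz; apply (Hg z Hz).
Qed.

Lemma continuous_locally_between (f : R -> R) x0 a b :
  continuous f x0 -> a < f x0 < b ->
  exists eps, 0 < eps /\ forall x, Rabs (x - x0) < eps -> a < f x < b.
Proof.
  intros Hf Hab.
  assert (Hr : 0 < Rmin (f x0 - a) (b - f x0)) by (apply Rmin_pos; lra).
  destruct (proj1 (filterlim_locally f (f x0)) Hf (mkposreal _ Hr)) as [[eps Heps] Hnear].
  exists eps; split; [exact Heps |].
  intros x Hx.
  specialize (Hnear x Hx); simpl in Hnear.
  unfold ball in Hnear; simpl in Hnear; unfold AbsRing_ball, abs, minus, plus, opp in Hnear; simpl in Hnear.
  apply Rabs_def2 in Hnear.
  pose proof (Rmin_l (f x0 - a) (b - f x0)); pose proof (Rmin_r (f x0 - a) (b - f x0)).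
  lra.
Qed.

Lemma continuous_pair (u v : R -> R) x :
  continuous u x -> continuous v x -> continuous (fun t => (u t, v t) : C) x.
Proof.
  intros Hu Hv; apply filterlim_locally; intros eps.
  apply filterlim_locally with (eps := eps) in Hu.
  apply filterlim_locally with (eps := eps) in Hv.
  generalize (filter_and _ _ Hu Hv); apply filter_imp.
  intros t [H1 H2]; split; assumption.
Qed.

Definition chareq (A B tau : R) (lam : C) : C :=
  (lam + RtoC A + RtoC B * Cexp (- (lam * RtoC tau)))%C.

Lemma chareq_pairE A B tau x y :
  chareq A B tau (x, y) =
  (x + A + B * exp (- (x * tau)) * cos (y * tau),
   y - B * exp (- (x * tau)) * sin (y * tau)).
Proof.
  unfold chareq, Cexp, Cplus, Cmult, Copp, RtoC; simpl.
  rewrite cos_neg, sin_neg.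
  replace (x * tau - y * 0) with (x * tau) by ring.
  replace (x * 0 + y * tau) with (y * tau) by ring.
  f_equal; ring.
Qed.

Lemma chareq_rootP A B tau x y :
  chareq A B tau (x, y) = 0%C <->
  x + A + B * exp (- (x * tau)) * cos (y * tau) = 0 /\
  y - B * exp (- (x * tau)) * sin (y * tau) = 0.
Proof.
  rewrite chareq_pairE; split.
  - intros H; injection H; auto.
  - intros [-> ->]; reflexivity.
Qed.

Lemma chareq_root_conj A B tau x y :
  chareq A B tau (x, y) = 0%C -> chareq A B tau (x, - y) = 0%C.
Proof.
  rewrite !chareq_rootP, Ropp_mult_distr_l_reverse, cos_neg, sin_neg.
  intros [H1 H2]; split; lra.
Qed.

Lemma chareq_root_Re_neg A B tau lam :
  - A < B <= A -> 0 <= tau -> chareq A B tau lam = 0%C -> Re lam < 0.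
Proof.
  destruct lam as [x y]; simpl; rewrite chareq_rootP.
  intros HAB Htau [Hre Him].
  apply Rnot_le_lt; intros Hx0.
  set (E := exp (- (x * tau))) in *.
  set (c := cos (y * tau)) in *; set (s := sin (y * tau)) in *.
  assert (HE0 : 0 < E) by apply exp_pos.
  assert (HE1 : E <= 1).
  { rewrite <- exp_0; unfold E.
    destruct (Rle_lt_or_eq_dec (- (x * tau)) 0) as [Hlt | ->];
      [nra | left; now apply exp_increasing | right; reflexivity]. }
  assert (Hmod : (x + A) ^ 2 + y ^ 2 = (B * E) ^ 2).
  { pose proof (sin2_cos2 (y * tau)) as Hcs; unfold Rsqr in Hcs; fold c s in Hcs.
    replace (x + A) with (- (B * E * c)) by lra; replace y with (B * E * s) by lra.
    replace ((B * E) ^ 2) with ((B * E) ^ 2 * (s * s + c * c)) by (rewrite Hcs; ring).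
    ring. }
  assert (HBE : (B * E) ^ 2 <= B ^ 2).
  { replace ((B * E) ^ 2) with (B ^ 2 * (E * E)) by ring.
    assert (E * E <= 1) by nra. nra. }
  assert (HBA : B ^ 2 <= A ^ 2) by nra.
  assert (HAx : A ^ 2 <= (x + A) ^ 2) by nra.
  assert (Hy : y = 0) by nra.
  assert (Hx : x = 0) by (subst y; nra).
  subst x y; unfold c, E in Hre.
  rewrite Rmult_0_l, Ropp_0, exp_0, cos_0 in Hre; lra.
Qed.

Definition theta_cot (th : R) : R := th * cos th / sin th.

Definition crossing_phase (th : R) : R := ln (th / sin th) - theta_cot th.

Definition crossing_phase_deriv (th : R) : R :=
  1 / th + th / (sin th * sin th) - 2 * cos th / sin th.

Lemma is_derive_theta_cot th :
  sin th <> 0 -> is_derive theta_cot th (cos th / sin th - th / (sin th * sin th)).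
Proof.
  intros Hs; unfold theta_cot; auto_derive; [exact Hs |].
  pose proof (sin2_cos2 th) as Hcs; unfold Rsqr in Hcs.
  field_simplify; [| exact Hs | exact Hs].
  replace (cos th ^ 2) with (1 - sin th ^ 2) by (simpl; lra).
  field; exact Hs.
Qed.

Lemma is_derive_crossing_phase th :
  0 < th < PI -> is_derive crossing_phase th (crossing_phase_deriv th).
Proof.
  intros Hth.
  assert (Hs : 0 < sin th) by (apply sin_gt_0; lra).
  unfold crossing_phase, crossing_phase_deriv.
  replace (1 / th + th / (sin th * sin th) - 2 * cos th / sin th)
    with ((1 / th - cos th / sin th)
          - (cos th / sin th - th / (sin th * sin th))) by (field; lra).
  apply (is_derive_minus (fun t => ln (t / sin t)) theta_cot).
  - auto_derive.
    + split; [| split]; [lra | apply Rdiv_lt_0_compat; lra | lra].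
    + field; lra.
  - apply is_derive_theta_cot; lra.
Qed.

Lemma crossing_phase_deriv_pos th : 0 < th < PI -> 0 < crossing_phase_deriv th.
Proof.
  intros Hth.
  assert (Hs : 0 < sin th) by (apply sin_gt_0; lra).
  assert (Hc : cos th < 1).
  { pose proof (sin2_cos2 th) as Hcs; unfold Rsqr in Hcs.
    assert (0 < sin th * sin th) by nra. nra. }
  unfold crossing_phase_deriv.
  replace (1 / th + th / (sin th * sin th) - 2 * cos th / sin th)
    with (((sin th - th) ^ 2 + 2 * th * sin th * (1 - cos th)) / (th * (sin th * sin th)))
    by (field; lra).
  assert (0 < th * sin th * (1 - cos th)).
  { apply Rmult_lt_0_compat; [apply Rmult_lt_0_compat |]; lra. }
  pose proof (pow2_ge_0 (sin th - th)).
  apply Rdiv_lt_0_compat; [lra | apply Rmult_lt_0_compat; nra].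
Qed.

Lemma crossing_phase_increasing x y :
  0 < x -> x < y -> y < PI -> crossing_phase x < crossing_phase y.
Proof.
  intros Hx Hxy Hy.
  destruct (MVT_cor2 crossing_phase crossing_phase_deriv x y Hxy) as [c [Hc Hcxy]].
  - intros c Hc; apply is_derive_Reals, is_derive_crossing_phase; lra.
  - assert (0 < crossing_phase_deriv c) by (apply crossing_phase_deriv_pos; lra).
    nra.
Qed.

Definition phase_root (A t th : R) : C := (- (A + theta_cot th / t), th / t).

Lemma chareq_phase_root A B t th :
  0 < B -> 0 < t -> 0 < th -> 0 < sin th ->
  ln (B * t) + A * t = crossing_phase th ->
  chareq A B t (phase_root A t th) = 0%C.
Proof.
  intros HB Ht Hth Hs Hphase.
  assert (Hexp : exp (- (- (A + theta_cot th / t) * t)) = th / (B * t * sin th)).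
  { replace (- (- (A + theta_cot th / t) * t)) with (ln (th / sin th) - ln (B * t))
      by (unfold crossing_phase in Hphase; field_simplify; lra).
    rewrite <- ln_div, exp_ln.
    - field; lra.
    - apply Rdiv_lt_0_compat; [apply Rdiv_lt_0_compat |]; nra.
    - apply Rdiv_lt_0_compat; lra.
    - nra. }
  apply chareq_rootP; rewrite Hexp.
  replace (th / t * t) with th by (field; lra).
  unfold theta_cot; split; field; lra.
Qed.

Lemma crossing_phase_local_inverse (H : R -> R) (t0 th0 dH : R) :
  0 < th0 < PI -> is_derive H t0 dH -> H t0 = crossing_phase th0 ->
  exists (eps : R) (theta : R -> R), 0 < eps /\ theta t0 = th0 /\
    (forall t, Rabs (t - t0) < eps -> 0 < theta t < PI /\ crossing_phase (theta t) = H t) /\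
    is_derive theta t0 (dH / crossing_phase_deriv th0).
Proof.
  intros Hth0 HdH HHt0.
  set (lb := th0 / 2); set (ub := (th0 + PI) / 2).
  assert (Hd : forall x, lb <= x <= ub ->
                 derivable_pt_lim crossing_phase x (crossing_phase_deriv x)).
  { intros x Hx; apply is_derive_Reals, is_derive_crossing_phase; unfold lb, ub in Hx; lra. }
  assert (Hincr : forall x y, lb <= x -> x < y -> y <= ub ->
                    crossing_phase x < crossing_phase y).
  { intros x y Hx Hxy Hy; apply crossing_phase_increasing; unfold lb, ub in *; lra. }
  destruct (increasing_inverse_ex crossing_phase lb ub) as [g [Hgf Hg]].
  { unfold lb, ub; lra. }
  { intros x Hx; apply derivable_continuous_pt; eexists; apply Hd, Hx. }
  { exact Hincr. }
  assert (Hbetween : crossing_phase lb < H t0 < crossing_phase ub).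
  { rewrite HHt0; split; apply Hincr; unfold lb, ub; lra. }
  destruct (continuous_locally_between H t0 _ _
              (ex_derive_continuous _ _ (ex_intro _ _ HdH)) Hbetween)
    as [eps [Heps Hnear]].
  assert (Hg0 : g (H t0) = th0) by (rewrite HHt0; apply Hgf; unfold lb, ub; lra).
  exists eps, (fun t => g (H t)); split; [exact Heps |]; split; [exact Hg0 |]; split.
  - intros t Ht; destruct (Hg (H t)) as [Hrange Hphase]; [specialize (Hnear t Ht); lra |].
    unfold lb, ub in Hrange; split; [lra | exact Hphase].
  - unfold Rdiv; rewrite <- Hg0; apply (is_derive_comp g H); [| exact HdH].
    apply is_derive_Reals, (derivable_pt_lim_increasing_inverse crossing_phase
                              crossing_phase_deriv g lb ub); auto;
      [unfold lb, ub; lra | rewrite Hg0; apply Rgt_not_eq, crossing_phase_deriv_pos, Hth0].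
Qed.

Definition crossing_freq (A B : R) : R := sqrt (B * B - A * A).
Definition crossing_angle (A B : R) : R := acos (- (A / B)).
Definition crossing_delay (A B : R) : R := crossing_angle A B / crossing_freq A B.

Section Crossing.

Variables A B : R.
Hypothesis HAB : - B < A < B.

Local Notation w := (crossing_freq A B).
Local Notation th0 := (crossing_angle A B).
Local Notation t0 := (crossing_delay A B).

Lemma crossing_freq_pos : 0 < w.
Proof. apply sqrt_lt_R0; nra. Qed.

Lemma crossing_freq_sq : w * w = B * B - A * A.
Proof. apply sqrt_sqrt; nra. Qed.

Lemma crossing_ratio_bounds : -1 < - (A / B) < 1.
Proof.
  assert (0 < / B) by (apply Rinv_0_lt_compat; lra).
  assert (B * / B = 1) by (field; lra).
  unfold Rdiv; split; nra.
Qed.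

Lemma crossing_angle_bounds : 0 < th0 < PI.
Proof. apply acos_bound_lt, crossing_ratio_bounds. Qed.

Lemma cos_crossing_angle : cos th0 = - (A / B).
Proof. pose proof crossing_ratio_bounds; apply cos_acos; lra. Qed.

Lemma sin_crossing_angle : sin th0 = w / B.
Proof.
  pose proof crossing_ratio_bounds; pose proof crossing_freq_pos.
  unfold crossing_angle at 1; rewrite sin_acos by lra.
  replace (1 - (- (A / B))²) with ((w / B)²).
  - apply sqrt_Rsqr, Rlt_le, Rdiv_lt_0_compat; lra.
  - unfold Rsqr; replace (w / B * (w / B)) with (w * w / (B * B)) by (field; lra).
    rewrite crossing_freq_sq; field; lra.
Qed.

Lemma crossing_delay_pos : 0 < t0.
Proof.
  pose proof crossing_angle_bounds; pose proof crossing_freq_pos.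
  apply Rdiv_lt_0_compat; lra.
Qed.

Lemma crossing_angle_delay : th0 = w * t0.
Proof. pose proof crossing_freq_pos; unfold crossing_delay; field; lra. Qed.

Lemma theta_cot_crossing_angle : theta_cot th0 = - (A * t0).
Proof.
  pose proof crossing_freq_pos.
  unfold theta_cot; rewrite cos_crossing_angle, sin_crossing_angle, crossing_angle_delay.
  field; lra.
Qed.

Lemma crossing_phase_delay : ln (B * t0) + A * t0 = crossing_phase th0.
Proof.
  pose proof crossing_freq_pos.
  unfold crossing_phase; rewrite theta_cot_crossing_angle.
  replace (th0 / sin th0) with (B * t0); [ring |].
  rewrite sin_crossing_angle, crossing_angle_delay; field; lra.
Qed.

Lemma crossing_phase_deriv_angle :
  crossing_phase_deriv th0 = (1 + 2 * A * t0 + t0 * t0 * B * B) / (w * t0).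
Proof.
  pose proof crossing_freq_pos; pose proof crossing_delay_pos.
  unfold crossing_phase_deriv; rewrite cos_crossing_angle, sin_crossing_angle.
  rewrite crossing_angle_delay; field; repeat split; lra.
Qed.

Lemma theta_cot_deriv_angle :
  cos th0 / sin th0 - th0 / (sin th0 * sin th0) = - (A + t0 * B * B) / w.
Proof.
  pose proof crossing_freq_pos; pose proof crossing_delay_pos.
  rewrite cos_crossing_angle, sin_crossing_angle, crossing_angle_delay.
  field; repeat split; lra.
Qed.

Lemma crossing_denominator_pos : 0 < 1 + 2 * A * t0 + t0 * t0 * B * B.
Proof.
  pose proof crossing_delay_pos.
  assert (0 < t0 * t0 * (B * B - A * A)) by (apply Rmult_lt_0_compat; nra).
  pose proof (pow2_ge_0 (1 + A * t0)).
  replace (1 + 2 * A * t0 + t0 * t0 * B * B)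
    with ((1 + A * t0) ^ 2 + t0 * t0 * (B * B - A * A)) by ring.
  lra.
Qed.

Lemma crossing_speed (theta : R -> R) :
  theta t0 = th0 -> is_derive theta t0 ((1 / t0 + A) / crossing_phase_deriv th0) ->
  is_derive (fun t => Re (phase_root A t (theta t))) t0
    ((B * B - A * A) / (1 + 2 * A * t0 + t0 * t0 * B * B)).
Proof.
  intros Htheta0 Hdtheta.
  pose proof crossing_angle_bounds; pose proof crossing_delay_pos.
  pose proof crossing_freq_pos; pose proof crossing_denominator_pos.
  set (dth := (1 / t0 + A) / crossing_phase_deriv th0) in Hdtheta.
  assert (Hdc : is_derive (fun t => theta_cot (theta t)) t0
                  (dth * (cos th0 / sin th0 - th0 / (sin th0 * sin th0)))).
  { apply (is_derive_comp theta_cot theta); [| exact Hdtheta].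
    rewrite Htheta0; apply is_derive_theta_cot, Rgt_not_eq, sin_gt_0; lra. }
  assert (Hid : is_derive (fun t : R => t) t0 1) by (auto_derive; reflexivity).
  set (dRe := - (0 + (dth * (cos th0 / sin th0 - th0 / (sin th0 * sin th0)) * t0
                      - theta_cot (theta t0) * 1) / t0 ^ 2)).
  replace ((B * B - A * A) / (1 + 2 * A * t0 + t0 * t0 * B * B)) with dRe.
  - apply (is_derive_opp (fun t => A + theta_cot (theta t) / t)).
    apply (is_derive_plus (fun _ => A) (fun t => theta_cot (theta t) / t)).
    + exact (is_derive_const A t0).
    + apply (is_derive_div (fun t => theta_cot (theta t)) (fun t => t));
        [exact Hdc | exact Hid | lra].
  - unfold dRe, dth; rewrite Htheta0, theta_cot_crossing_angle, theta_cot_deriv_angle,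
      crossing_phase_deriv_angle.
    field; repeat split; lra.
Qed.

Lemma chareq_crossing_branch :
  exists (eps : R) (lam : R -> C), 0 < eps /\
    lam t0 = (0, w) /\
    (forall tau, Rabs (tau - t0) < eps -> chareq A B tau (lam tau) = 0%C) /\
    continuous lam t0 /\
    exists r : R, 0 < r /\ is_derive (fun tau => Re (lam tau)) t0 r.
Proof.
  pose proof crossing_angle_bounds as Hth0.
  pose proof crossing_delay_pos as Ht0.
  pose proof crossing_freq_pos as Hw.
  assert (HH : is_derive (fun t => ln (B * t) + A * t) t0 (1 / t0 + A)).
  { auto_derive; [nra | field; lra]. }
  destruct (crossing_phase_local_inverse _ t0 th0 _ Hth0 HH crossing_phase_delay)
    as [eps [theta [Heps [Htheta0 [Htheta Hdtheta]]]]].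
  pose proof (crossing_speed theta Htheta0 Hdtheta) as HRe.
  set (lam := fun t => phase_root A t (theta t)).
  exists (Rmin eps t0), lam; split; [apply Rmin_pos; lra |].
  split; [| split; [| split]].
  - unfold lam, phase_root; rewrite Htheta0, theta_cot_crossing_angle, crossing_angle_delay.
    f_equal; field; lra.
  - intros tau Htau.
    assert (Htau_eps : Rabs (tau - t0) < eps)
      by (eapply Rlt_le_trans; [exact Htau | apply Rmin_l]).
    assert (Htau_pos : 0 < tau).
    { assert (Hlt : Rabs (tau - t0) < t0)
        by (eapply Rlt_le_trans; [exact Htau | apply Rmin_r]).
      apply Rabs_def2 in Hlt; lra. }
    destruct (Htheta tau Htau_eps) as [Hrange Hphase].
    apply chareq_phase_root; [lra | exact Htau_pos | lra | apply sin_gt_0; lra |].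
    rewrite Hphase; reflexivity.
  - assert (HIm : ex_derive (fun t => Im (lam t)) t0).
    { eexists; apply (is_derive_div theta (fun t => t)); [exact Hdtheta | | lra].
      auto_derive; reflexivity. }
    apply (continuous_pair (fun t => Re (lam t)) (fun t => Im (lam t))).
    + exact (ex_derive_continuous _ _ (ex_intro _ _ HRe)).
    + exact (ex_derive_continuous _ _ HIm).
  - eexists; split; [| exact HRe].
    apply Rdiv_lt_0_compat; [nra | apply crossing_denominator_pos].
Qed.

End Crossing.

Lemma hopf_at_crossing_delay p dl g :
  - (p * dl * g) < (1 - p) * dl * g < p * dl * g ->
  hopf_at p dl g (crossing_delay ((1 - p) * dl * g) (p * dl * g)).
Proof.
  intros HAB.
  destruct (chareq_crossing_branch _ _ HAB)
    as [eps [lam [Heps [Hlam0 [Hroot [Hcont Hderiv]]]]]].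
  assert (Hroot0 : chareq ((1 - p) * dl * g) (p * dl * g)
                     (crossing_delay ((1 - p) * dl * g) (p * dl * g))
                     (0, crossing_freq ((1 - p) * dl * g) (p * dl * g)) = 0%C).
  { rewrite <- Hlam0; apply Hroot; rewrite Rminus_eq_0, Rabs_R0; exact Heps. }
  exists (crossing_freq ((1 - p) * dl * g) (p * dl * g)).
  split; [apply crossing_freq_pos, HAB |].
  split; [exact Hroot0 |].
  split; [apply chareq_root_conj, Hroot0 |].
  exists eps, lam; auto.
Qed.

Lemma crossing_delay_scaled p k :
  0 < k -> 1 / 2 < p ->
  crossing_delay ((1 - p) * k) (p * k) = acos (- ((1 - p) / p)) / (k * sqrt (2 * p - 1)).
Proof.
  intros Hk Hp.
  unfold crossing_delay, crossing_angle, crossing_freq.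
  replace ((1 - p) * k / (p * k)) with ((1 - p) / p) by (field; lra).
  replace (p * k * (p * k) - (1 - p) * k * ((1 - p) * k)) with (k * k * (2 * p - 1)) by ring.
  rewrite sqrt_mult, sqrt_square; nra.
Qed.

Lemma delta_gam_pos a b c d :
  0 < delta1 b d -> 0 < delta2 a c -> 0 < delta a b c d * gam a b c d.
Proof.
  intros H1 H2.
  assert (Hd : 0 < delta a b c d) by (unfold delta; lra).
  assert (Hs : 0 < sstar a b c d < 1).
  { unfold sstar; split; [apply Rdiv_lt_0_compat; lra |].
    apply (Rmult_lt_reg_r (delta a b c d)); [lra |].
    unfold Rdiv; rewrite Rmult_assoc, Rinv_l; unfold delta in *; lra. }
  unfold gam; apply Rmult_lt_0_compat; [| apply Rmult_lt_0_compat]; lra.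
Qed.

Theorem proposition4 (a b c d p : R) :
  0 < delta1 b d -> 0 < delta2 a c -> 0 <= p <= 1 ->
  (p <= 1/2 -> forall tau : R, 0 <= tau ->
      asympt_stable p (delta a b c d) (gam a b c d) tau) /\
  (1/2 < p -> hopf_at p (delta a b c d) (gam a b c d) (tau_cr a b c d p)).
Proof.
  intros H1 H2 Hp.
  pose proof (delta_gam_pos a b c d H1 H2) as Hk.
  split.
  - intros Hp2 tau Htau lam Hroot.
    apply (chareq_root_Re_neg ((1 - p) * delta a b c d * gam a b c d)
             (p * delta a b c d * gam a b c d) tau); [nra | exact Htau | exact Hroot].
  - intros Hp2.
    replace (tau_cr a b c d p)
      with (crossing_delay ((1 - p) * delta a b c d * gam a b c d)
                           (p * delta a b c d * gam a b c d)).
    + apply hopf_at_crossing_delay; nra.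
    + rewrite !Rmult_assoc, crossing_delay_scaled by lra; reflexivity.
Qed.
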